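(* Let $G$ be a finite group acting $2$-by-block-transitively on a set $\Omega$, and let $(\omega,\omega')$ be a pair of points in different blocks. Then \[|G(\omega,\omega')| = \frac{|G(\omega)|^2}{|G|-|G([\omega])|};\] in particular the right-hand side is an integer.
   Context: $\Omega$ carries an equivalence relation whose classes are blocks; $[\omega]$ is the block of $\omega$, $G([\omega])$ its setwise stabilizer, $G(\omega)$ the point stabilizer, $G(\omega,\omega')=G(\omega)\cap G(\omega')$. The action is $2$-by-block-transitive if the relation is $G$-invariant, there are at least two blocks, and $G$ is transitive on ordered pairs of points in different blocks. *)

From mathcomp Require Import all_boot all_order all_algebra all_fingroup.
Set Implicit Arguments. Unset Strict Implicit. Unset Printing Implicit Defensive.

Definition block (T : finType) (e : rel T) (x : T) : {set T} := [set y | e x y].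

Definition is_equiv (T : finType) (e : rel T) : Prop :=
  [/\ reflexive e, symmetric e & transitive e].

Definition two_by_block_transitive (gT : finGroupType) (G : {group gT})
    (T : finType) (to : action G T) (e : rel T) : Prop :=
  [/\ is_equiv e,
      (forall g x y, g \in G -> e (to x g) (to y g) = e x y),
      (exists x y, ~~ e x y) &
      (forall x y x' y', ~~ e x y -> ~~ e x' y' ->
         exists2 g, g \in G & to x g = x' /\ to y g = y')].

From mathcomp Require Import all_boot all_order all_algebra all_fingroup.
Import GRing.Theory Num.Theory.

Set Implicit Arguments.
Unset Strict Implicit.
Unset Printing Implicit Defensive.

(* Three applications of the orbit-stabiliser theorem.  G is transitive on
   points, the block stabiliser G([w]) is transitive on the block [w], and
   G(w) is transitive on the complement of [w] (with point stabiliser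
   G(w, w')); in the first two the stabiliser of w is G(w).  Hence
   |G| - |G([w])| = (|Omega| - |[w]|) |G(w)|  and
   |G(w)| = (|Omega| - |[w]|) |G(w, w')|, and eliminating |Omega| - |[w]| gives the formula. *)

Section InvariantEquivalence.

Local Open Scope group_scope.

Variables (gT : finGroupType) (G : {group gT}) (T : finType) (to : action G T).
Variable e : rel T.
Hypothesis e_trans : transitive e.
Hypothesis e_inv : forall g x y, g \in G -> e (to x g) (to y g) = e x y.

Lemma mem_astab1 (A : {set gT}) x a :
  (a \in 'C_A[x | to]) = [&& a \in A, a \in G & to x a == x].
Proof. by rewrite !inE sub1set inE. Qed.

Lemma block_stab_of_related x g :
  g \in G -> e x (to x g) -> g \in 'N_G(block e x | to).
Proof.
move=> gG exg; rewrite !inE gG; apply/subsetP=> y; rewrite !inE => exy.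
by apply: e_trans exg _; rewrite e_inv.
Qed.

Lemma astab1_sub_block_stab x :
  e x x -> 'C_G[x | to] \subset 'N_G(block e x | to).
Proof.
move=> exx; apply/subsetP=> a; rewrite mem_astab1 => /and3P[aG _ /eqP xa].
by apply: block_stab_of_related; rewrite ?xa.
Qed.

End InvariantEquivalence.

Section TwoByBlockTransitive.

Local Open Scope group_scope.

Variables (gT : finGroupType) (G : {group gT}) (T : finType) (to : action G T).
Variable e : rel T.
Hypothesis e_equiv : is_equiv e.
Hypothesis e_inv : forall g x y, g \in G -> e (to x g) (to y g) = e x y.
Hypothesis pairs_trans : forall x y x' y', ~~ e x y -> ~~ e x' y' ->
  exists2 g, g \in G & to x g = x' /\ to y g = y'.
Variables w w' : T.
Hypothesis ww' : ~~ e w w'.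

Let e_refl : reflexive e. Proof. by case: e_equiv. Qed.
Let e_sym : symmetric e. Proof. by case: e_equiv. Qed.
Let e_trans : transitive e. Proof. by case: e_equiv. Qed.

Local Notation B := (block e w).
Local Notation Gw := 'C_G[w | to].
Local Notation GB := 'N_G(B | to).
Local Notation Gww' := ('C_G[w | to] :&: 'C_G[w' | to]).

Lemma block_unrelated y : e w y -> ~~ e y w'.
Proof. by move=> ewy; apply: contra ww'; apply: e_trans. Qed.

Lemma orbit_setT : orbit to G w = [set: T].
Proof.
apply/setP=> y; rewrite inE; apply/orbitP.
have [ewy | newy] := boolP (e w y).
  have [g gG [gw _]] := pairs_trans ww' (block_unrelated ewy).
  by exists g.
rewrite e_sym in newy; have [g gG [gw _]] := pairs_trans ww' newy.
by exists g.
Qed.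

Lemma orbit_block_stab : orbit to GB w = B.
Proof.
apply/setP=> y; apply/idP/idP.
  case/orbitP=> a /setIP[_ aN] <-.
  by rewrite (astabs_act _ aN) inE.
rewrite inE => ewy; have [g gG [gw _]] := pairs_trans ww' (block_unrelated ewy).
by apply/orbitP; exists g; rewrite // block_stab_of_related // gw.
Qed.

Lemma astab1_block_stab : 'C_GB[w | to] = Gw.
Proof.
have GwB : Gw \subset 'N(B | to).
  have := astab1_sub_block_stab e_trans e_inv (e_refl w).
  by move/subset_trans; apply; apply: subsetIr.
by rewrite setIAC (setIidPl GwB).
Qed.

Lemma orbit_astab1_compl : orbit to Gw w' = ~: B.
Proof.
apply/setP=> y; rewrite !inE; apply/idP/idP.
  case/orbitP=> a; rewrite mem_astab1 => /and3P[aG _ /eqP aw] <-.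
  by rewrite -{1}aw e_inv.
move=> newy; have [g gG [gw gw']] := pairs_trans ww' newy.
by apply/orbitP; exists g; rewrite // mem_astab1 gG gw eqxx.
Qed.

Lemma astab1_point_stab : 'C_Gw[w' | to] = Gww'.
Proof. by rewrite setIACA setIid setIA. Qed.

Lemma card_group_transitive : (#|T| * #|Gw|)%N = #|G|.
Proof. by rewrite -cardsT -orbit_setT card_orbit_in_stab. Qed.

Lemma card_block_stab : (#|B| * #|Gw|)%N = #|GB|.
Proof.
by rewrite -{1}orbit_block_stab -astab1_block_stab card_orbit_in_stab ?subsetIl.
Qed.

Lemma card_astab1_compl : (#|~: B| * #|Gww'|)%N = #|Gw|.
Proof.
by rewrite -orbit_astab1_compl -astab1_point_stab card_orbit_in_stab ?subsetIl.
Qed.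

Lemma card_block_stab_compl : (#|G| - #|GB|)%N = (#|~: B| * #|Gw|)%N.
Proof.
by rewrite -card_group_transitive -card_block_stab -mulnBl -(cardsC B) addKn.
Qed.

Lemma card_block_stab_lt : (#|GB| < #|G|)%N.
Proof.
rewrite -subn_gt0 card_block_stab_compl muln_gt0 cardG_gt0 andbT.
by apply/card_gt0P; exists w'; rewrite !inE.
Qed.

Lemma card_astab2_mul : (#|Gww'| * (#|G| - #|GB|))%N = (#|Gw| ^ 2)%N.
Proof.
by rewrite card_block_stab_compl mulnA (mulnC #|Gww'|) card_astab1_compl.
Qed.

End TwoByBlockTransitive.

Theorem corollary2p2 (gT : finGroupType) (G : {group gT}) (T : finType)
    (to : action G T) (e : rel T) (w w' : T) :
  two_by_block_transitive to e -> ~~ e w w' ->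
  (#|('N_G(block e w | to))%g| < #|G|)%N /\
  (#|('C_G[w | to] :&: 'C_G[w' | to])%g|%:R : rat)
    = (#|('C_G[w | to])%g|%:R ^+ 2 /
       (#|G| - #|('N_G(block e w | to))%g|)%:R)%R.
Proof.
case=> [e_equiv e_inv _ pairs_trans] ww'.
have lt_GB_G := card_block_stab_lt e_equiv e_inv pairs_trans ww'.
split=> //.
rewrite -natrX -(card_astab2_mul e_equiv e_inv pairs_trans ww') natrM mulfK //.
by rewrite pnatr_eq0 -lt0n subn_gt0.
Qed.
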